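(* Consider the path graph on $n$ nodes with Laplacian $L_n$ and a set of control (observation) nodes $I_o=\{i_1<i_2<\dots<i_m\}\subset\{1,\dots,n\}$. The path is reachable (observable) from $I_o$ if and only if the matrices $N_{i_1-1}, M_{i_2-i_1-1},\dots,M_{i_m-i_{m-1}-1}, N_{n-i_m}$ do not have a common eigenvalue (an eigenvalue shared by all of them). The eigenvalues common to all these matrices are exactly the unreachable (unobservable) eigenvalues of $L_n$ from $I_o$.
   Context: The path graph on nodes $\{1,\dots,n\}$ has edges $\{i,i+1\}$; $L_n$ is tridiagonal with diagonal $(1,2,\dots,2,1)$ and off-diagonal $-1$. With $B=[e_{i_1}|\cdots|e_{i_m}]$, reachable from $I_o$ means $(L_n,B)$ is reachable, observable means $(L_n,B^T)$ is observable. An unreachable (unobservable) eigenvalue is $\lambda$ such that some $v\ne0$ satisfies $L_nv=\lambda v$ and $(v)_j=0$ for all $j\in I_o$. $N_\nu$ ($\nu\times\nu$) is tridiagonal with diagonal $(1,2,\dots,2)$ and off-diagonal $-1$; $M_\mu$ ($\mu\times\mu$) is tridiagonal with diagonal all $2$ and off-diagonal $-1$. A matrix of size $0\times0$ is regarded as having no eigenvalues. *)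

From HB Require Import structures.
From mathcomp Require Import all_boot all_order all_algebra.
Set Implicit Arguments. Unset Strict Implicit. Unset Printing Implicit Defensive.
Import Order.TTheory GRing.Theory Num.Theory.
Local Open Scope ring_scope.

(* Nodes of the path are indexed 0..n-1 (node k+1 of the paper is k here). *)

Section Defs.
Variable R : rcfType.

Definition path_adj (n : nat) (i j : 'I_n) : bool :=
  (i.+1 == j :> nat) || (j.+1 == i :> nat).

Definition pathLap (n : nat) : 'M[R]_n :=
  \matrix_(i, j) (if i == j then (#|[set k | path_adj i k]|)%:R
                  else if path_adj i j then -1 else 0).

Definition Nmat (nu : nat) : 'M[R]_nu :=
  \matrix_(i, j) (if i == j then (if val i == 0%N then 1 else 2)
                  else if path_adj i j then -1 else 0).

Definition Mmat (mu : nat) : 'M[R]_mu :=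
  \matrix_(i, j) (if i == j then 2 else if path_adj i j then -1 else 0).

Definition inputMat (n : nat) (Io : {set 'I_n}) : 'M[R]_(n, #|Io|) :=
  \matrix_(i, j) (if i == enum_val j then 1 else 0).

Definition reachable (n p : nat) (A : 'M[R]_n) (B : 'M[R]_(n, p)) : bool :=
  \rank (\mxrow_(k < n) (A ^+ k *m B)) == n.

Definition observable (n p : nat) (A : 'M[R]_n) (C : 'M[R]_(p, n)) : bool :=
  \rank (\mxcol_(k < n) (C *m A ^+ k)) == n.

Definition unreachable_eig (n : nat) (Io : {set 'I_n}) (lam : R) : Prop :=
  exists v : 'cV[R]_n, [/\ v != 0, pathLap n *m v = lam *: v &
                         forall j, j \in Io -> v j 0 = 0].

Definition ctrl_seq (n : nat) (Io : {set 'I_n}) : seq nat :=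
  [seq val i | i <- enum Io].

(* lam is an eigenvalue of every one of
   N_{i_1-1}, M_{i_2-i_1-1}, ..., M_{i_m-i_{m-1}-1}, N_{n-i_m}
   (1-based i_k in the paper; s = 0-based list here). *)
Definition common_eig (n : nat) (Io : {set 'I_n}) (lam : R) : Prop :=
  let s := ctrl_seq Io in
  [/\ eigenvalue (Nmat (head 0%N s)) lam,
      (forall k, (k.+1 < size s)%N ->
         eigenvalue (Mmat (nth 0%N s k.+1 - nth 0%N s k - 1)) lam)
    & eigenvalue (Nmat (n - (last 0%N s).+1)) lam].

End Defs.

From HB Require Import structures.
From mathcomp Require Import all_boot all_order all_algebra.
From mathcomp Require Import ring lra zify complex.
Set Implicit Arguments. Unset Strict Implicit. Unset Printing Implicit Defensive.
Import Order.TTheory GRing.Theory Num.Theory.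
Local Open Scope ring_scope.

(* An eigenvector v of a tridiagonal matrix with off-diagonal -1 and interior
   diagonal 2 satisfies v_{j+1} = (2 - λ) v_j - v_{j-1}, so it is determined by
   v_0.  Hence the eigenvectors of L_n are the multiples of the solution g with
   g_0 = 1, g_1 = 1 - λ, and λ is an eigenvalue of L_n iff g_n = g_{n-1};
   likewise λ is an eigenvalue of N_ν iff g_ν = 0 and of M_μ iff u_{μ+1} = 0,
   where u is the solution with u_0 = 0, u_1 = 1.  If g_a = 0 then
   g_{a+j} = g_{a+1} u_j with g_{a+1} ≠ 0, so "g vanishes at i_1 < ... < i_m and
   g_n = g_{n-1}" splits into the eigenvalue conditions for N_{i_1-1},
   M_{i_{k+1}-i_k-1} and N_{n-i_m}: the common eigenvalues are exactly the
   eigenvalues of L_n with an eigenvector vanishing on I_o.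
   Reachability is then the Popov-Belevitch-Hautus test: the left kernel of the
   Kalman matrix is L_n-invariant (Cayley-Hamilton), and an invariant subspace
   of a real symmetric matrix contains a real eigenvector, because the real and
   imaginary parts of a complex eigenvector of the restriction span a plane on
   which symmetry forces the eigenvalue to be real.  Observability of (L_n, B^T)
   is reachability of (L_n, B) since L_n is symmetric. *)

Section Recurrence.
Variables (R : comNzRingType) (c : R).

(* The solution of x_{k+2} = c x_{k+1} - x_k with x_0 = a, x_1 = b, computed by
   shifting the pair of initial values. *)
Fixpoint rec (a b : R) (k : nat) : R :=
  if k is k'.+1 then rec b (c * b - a) k' else a.

Lemma rec0 a b : rec a b 0 = a. Proof. by []. Qed.
Lemma recS a b k : rec a b k.+1 = rec b (c * b - a) k. Proof. by []. Qed.

Lemma recSS a b k : rec a b k.+2 = c * rec a b k.+1 - rec a b k.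
Proof. by elim: k a b => [|k IH] a b //; rewrite [LHS]recS IH -!recS. Qed.

Lemma recD a b i j : rec a b (i + j) = rec (rec a b i) (rec a b i.+1) j.
Proof. by elim: i a b => [|i IH] a b //; rewrite addSn recS IH -!recS. Qed.

Lemma recZ x a b k : x * rec a b k = rec (x * a) (x * b) k.
Proof. elim: k a b => [|k IH] a b //; rewrite !recS IH; congr rec; ring. Qed.

Lemma recB a b a' b' k : rec a b k - rec a' b' k = rec (a - a') (b - b') k.
Proof.
elim: k a b a' b' => [|k IH] a b a' b' //; rewrite !recS IH; congr rec; ring.
Qed.

Lemma rec_eq0 a b k : rec a b k = 0 -> rec a b k.+1 = 0 -> a = 0 /\ b = 0.
Proof.
elim: k a b => [|k IH] a b //; rewrite [rec a b k.+1]recS [rec a b k.+2]recS.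
by move=> /IH /[apply] -[-> /eqP]; rewrite mulr0 sub0r oppr_eq0 => /eqP.
Qed.

End Recurrence.

Arguments rec : simpl never.

Section PathSequences.
Variables (R : idomainType) (l : R).
Local Notation rec := (rec (2 - l)).

Definition useq := rec 0 1.
Definition gseq := rec 1 (1 - l).

Lemma gseq_useq k : gseq k = useq k.+1 - useq k.
Proof. by rewrite /useq recS recB; congr rec; ring. Qed.

Lemma gseqS_neq0 a : gseq a = 0 -> gseq a.+1 != 0.
Proof. by move=> ga; apply/eqP=> /(rec_eq0 ga) [/eqP]; rewrite oner_eq0. Qed.

Lemma gseqD a j : gseq a = 0 -> gseq (a + j) = gseq a.+1 * useq j.
Proof. by move=> ga; rewrite /gseq recD -/(gseq a) ga /useq recZ mulr0 mulr1. Qed.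

Lemma gseq_eq0_after a b : gseq a = 0 -> (a < b)%N ->
  gseq b = 0 <-> useq (b - a) = 0.
Proof.
move=> ga ab; rewrite -[in gseq b](subnKC (ltnW ab)) gseqD //.
split=> [/eqP|->]; last by rewrite mulr0.
by rewrite mulf_eq0 (negbTE (gseqS_neq0 ga)) => /eqP.
Qed.

Lemma gseq_end_after a n : gseq a = 0 -> (a < n)%N ->
  gseq n = gseq n.-1 <-> gseq (n - a.+1) = 0.
Proof.
move=> ga an; set nu := (n - a.+1)%N.
have -> : n = (a + nu.+1)%N by rewrite /nu; lia.
rewrite addnS /= -addnS !gseqD // [gseq nu]gseq_useq.
split=> [/eqP|/eqP]; last by rewrite subr_eq0 => /eqP ->.
by rewrite -subr_eq0 -mulrBr mulf_eq0 (negbTE (gseqS_neq0 ga)) => /eqP.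
Qed.

Lemma gseq_eq0_sorted a t : sorted ltn (a :: t) -> gseq a = 0 ->
  {in t, forall x, gseq x = 0} <->
  (forall k, (k < size t)%N -> useq (nth 0%N t k - nth 0%N (a :: t) k) = 0).
Proof.
elim: t a => [|b t IH] a st ga; first by split=> // ? ?.
move: st => /= /andP[ab st]; have IHb := IH b st; split=> [zt [|k] /= kt|zt].
- by apply/(gseq_eq0_after ga ab)/zt; rewrite inE eqxx.
- by apply: (IHb _).1 => // [|x xt]; [exact/zt/mem_head | apply/zt; rewrite inE xt orbT].
have gb : gseq b = 0 by apply/(gseq_eq0_after ga ab)/(zt 0%N).
by move=> x /predU1P[-> //|xt]; apply: (IHb gb).2 xt => k kt; apply: (zt k.+1).
Qed.

End PathSequences.

Section Tridiagonal.
Variables (R : fieldType) (k : nat) (d0 e : R).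

(* d0 is the first diagonal entry and e is subtracted from the last one:
   N_ν, M_μ and L_n are tridiag 1 0, tridiag 2 0 and tridiag 1 1. *)
Definition tridiag_diag (i : nat) : R :=
  (if i == 0%N then d0 else 2) - (if i.+1 == k then e else 0).

Definition tridiag : 'M[R]_k :=
  \matrix_(i, j) (if i == j then tridiag_diag i else if path_adj i j then -1 else 0).

Lemma tridiag_tr : tridiag^T = tridiag.
Proof.
apply/matrixP => i j; rewrite !mxE eq_sym /path_adj orbC.
by case: eqP => [->|].
Qed.

Lemma path_adj_irr (i : 'I_k) : path_adj i i = false.
Proof. by rewrite /path_adj orbb gtn_eqF. Qed.

Lemma sum_path_adj (x : nat -> R) (i : 'I_k) :
  \sum_j (if path_adj i j then x j else 0) =
  (if i : nat is i'.+1 then x i' else 0) + (if (i.+1 < k)%N then x i.+1 else 0).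
Proof.
rewrite /path_adj (eq_bigr (fun j : 'I_k =>
  (if j.+1 == i :> nat then x j else 0) + (if i.+1 == j :> nat then x j else 0))); last first.
  move=> j _; case: (i.+1 =P j) => [E1|_]; case: (j.+1 =P i) => [E2|_] /=;
  by rewrite ?addr0 ?add0r //; exfalso; lia.
rewrite big_split -!big_mkcond /=; congr (_ + _).
  case E: (i : nat) => [|i']; first by rewrite big_pred0.
  case: (ltnP i' k) => [i'k|]; first by rewrite (big_pred1 (Ordinal i'k)) // => j; rewrite eqSS.
  by move=> ki; have := ltn_ord i; lia.
case: ltnP => [ik|ki]; first by rewrite (big_pred1 (Ordinal ik)) // => j; rewrite eq_sym.
by rewrite big_pred0 // => j; apply/negbTE; have := ltn_ord j; lia.
Qed.

Lemma tridiag_mul_col (x : nat -> R) (i : 'I_k) :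
  (tridiag *m \col_(j < k) x j) i 0 = tridiag_diag i * x i
    - ((if i : nat is i'.+1 then x i' else 0) + (if (i.+1 < k)%N then x i.+1 else 0)).
Proof.
rewrite -sum_path_adj mxE (bigD1 i) //= !mxE eqxx.
rewrite [X in _ = _ - X](bigD1 i) //= path_adj_irr add0r -sumrN; congr (_ + _).
apply: eq_bigr => j ji; rewrite !mxE eq_sym (negbTE ji).
by case: path_adj; rewrite ?mulN1r ?mul0r ?oppr0.
Qed.

End Tridiagonal.

Section TridiagonalEigen.
Variables (R : fieldType) (l d0 e : R).
Local Notation r := (rec (2 - l) 1 (d0 - l)).
Local Notation rcol k := (\col_(j < k) r j).

Lemma tridiag_mul_rec k :
  tridiag k d0 e *m rcol k = l *: rcol k + (r k - e * r k.-1) *: \col_(j < k) (j.+1 == k)%:R.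
Proof.
apply/colP => -[[|i] ik]; rewrite tridiag_mul_col !mxE /tridiag_diag /=.
  by case: k ik => [|[|k]] //= _; rewrite ?recS !rec0; ring.
move: ik; rewrite leq_eqVlt => /orP[/eqP <-|ik]; first by rewrite eqxx ltnn recSS /=; ring.
by rewrite ik (ltn_eqF ik) recSS /=; ring.
Qed.

Lemma tridiag_eigenvectorP k (v : 'cV[R]_k.+1) :
  tridiag k.+1 d0 e *m v = l *: v <->
  v = v 0 0 *: rcol k.+1 /\ v 0 0 * (r k.+1 - e * r k) = 0.
Proof.
set a := v 0 0; split=> [Av|[vE Da]]; last first.
  by rewrite vE -scalemxAr tridiag_mul_rec scalerDr !scalerA Da scale0r addr0 mulrC.
(* x := v - a r solves the first k rows and x_0 = 0, so it vanishes. *)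
pose x j := v (inord j) 0 - a * r j.
have colx : \col_(j < k.+1) x j = v - a *: rcol k.+1.
  by apply/colP => j; rewrite !mxE /x inord_val.
have row j : (j < k)%N -> tridiag_diag k.+1 d0 e j * x j -
    ((if j is j'.+1 then x j' else 0) + x j.+1) = l * x j.
  move=> jk; have jk1 : (j < k.+1)%N by rewrite ltnW.
  have := tridiag_mul_col d0 e x (Ordinal jk1); rewrite /= ltnS jk => <-.
  rewrite colx mulmxBr -scalemxAr tridiag_mul_rec Av !mxE /= eqSS (ltn_eqF jk).
  by rewrite /x (_ : inord j = Ordinal jk1) ?mulr0 ?addr0; [ring | apply/val_inj/inordK].
have x0 j : (j <= k)%N -> x j = 0.
  elim/ltn_ind: j => -[|j] IH jk.
    by rewrite /x (_ : inord 0 = 0) ?mulr1 ?subrr //; apply/val_inj/inordK.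
  have := row j jk; rewrite (IH j _ (ltnW jk)) // mulr0.
  rewrite (_ : (if j is j'.+1 then x j' else 0) = 0); last by case: j IH jk => // j IH jk; apply: IH; lia.
  by rewrite !(add0r, mulr0) => /eqP; rewrite oppr_eq0 => /eqP.
have vE : v = a *: rcol k.+1.
  apply/eqP; rewrite -subr_eq0 -colx; apply/eqP/colP => j.
  by rewrite !mxE x0 // -ltnS.
split=> //; move/colP/(_ ord_max): Av.
rewrite {1}vE -scalemxAr tridiag_mul_rec vE !mxE /= eqxx mulr1 mulrDr mulrCA.
by rewrite -[RHS]addr0 => /addrI.
Qed.

Lemma eigenvalue_sym n (A : 'M[R]_n) : A^T = A ->
  eigenvalue A l <-> exists2 v : 'cV_n, A *m v = l *: v & v != 0.
Proof.
move=> sA; split=> [/eigenvalueP [v vA v0] | [v Av v0]]; last apply/eigenvalueP.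
  by exists v^T; rewrite ?trmx_eq0 // -{1}sA -trmx_mul vA linearZ.
by exists v^T; rewrite ?trmx_eq0 // -{1}sA -trmx_mul Av linearZ.
Qed.

Lemma eigenvalue_tridiag k : eigenvalue (tridiag k.+1 d0 e) l <-> r k.+1 = e * r k.
Proof.
rewrite eigenvalue_sym ?tridiag_tr //; split=> [[v /tridiag_eigenvectorP [vE] /eqP] | Dr].
  rewrite mulf_eq0 subr_eq0 => /orP[/eqP a0|/eqP //].
  by rewrite vE a0 scale0r eqxx.
exists (rcol k.+1); first by apply/tridiag_eigenvectorP; rewrite !mxE scale1r Dr subrr mulr0.
by apply/eqP => /colP /(_ 0); rewrite !mxE => /eqP; rewrite oner_eq0.
Qed.

End TridiagonalEigen.

Section PathGraph.
Variables (R : rcfType) (l : R).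

Lemma Nmat_tridiag nu : Nmat R nu = tridiag nu 1 0.
Proof. by apply/matrixP => i j; rewrite !mxE /tridiag_diag if_same subr0. Qed.

Lemma Mmat_tridiag mu : Mmat R mu = tridiag mu 2 0.
Proof. by apply/matrixP => i j; rewrite !mxE /tridiag_diag !if_same subr0. Qed.

Lemma pathLap_tridiag n : pathLap R n = tridiag n 1 1.
Proof.
apply/matrixP => i j; rewrite !mxE; case: eqP => // _.
rewrite -sum1_card natr_sum big_mkcond /=.
rewrite (eq_bigr (fun k : 'I_n => if path_adj i k then 1 else 0)) => [|k _]; last by rewrite inE.
rewrite (sum_path_adj (fun=> 1)) /tridiag_diag.
have [lt|eq] : (i.+1 < n)%N \/ i.+1 = n by have := ltn_ord i; lia.
  by rewrite lt (ltn_eqF lt); case: (i : nat) => [|?] /=; ring.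
by rewrite eq ltnn eqxx; case: (i : nat) => [|?] /=; ring.
Qed.

Lemma pathLap_tr n : (pathLap R n)^T = pathLap R n.
Proof. by rewrite pathLap_tridiag tridiag_tr. Qed.

Lemma eigenvalue_Nmat nu : eigenvalue (Nmat R nu) l <-> gseq l nu = 0.
Proof.
rewrite Nmat_tridiag; case: nu => [|nu]; last by rewrite eigenvalue_tridiag mul0r.
split=> [/eigenvalueP [v _] | /eqP]; first by rewrite (thinmx0 v) eqxx.
by rewrite /gseq rec0 oner_eq0.
Qed.

Lemma eigenvalue_Mmat mu : eigenvalue (Mmat R mu) l <-> useq l mu.+1 = 0.
Proof.
rewrite Mmat_tridiag /useq recS mulr1 subr0; case: mu => [|mu].
  split=> [/eigenvalueP [v _] | /eqP]; first by rewrite (thinmx0 v) eqxx.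
  by rewrite rec0 oner_eq0.
by rewrite eigenvalue_tridiag mul0r.
Qed.

Lemma unreachable_eigE n (Io : {set 'I_n}) : (0 < n)%N ->
  unreachable_eig Io l <->
  gseq l n = gseq l n.-1 /\ {in Io, forall j : 'I_n, gseq l j = 0}.
Proof.
case: n Io => // n Io _; rewrite /unreachable_eig pathLap_tridiag.
split=> [[v [v0 /tridiag_eigenvectorP [vE Dv] vIo]] | [gn gIo]].
  have a0 : v 0 0 != 0 by apply: contraNneq v0 => a0; rewrite vE a0 scale0r.
  move/eqP: Dv; rewrite mulf_eq0 (negbTE a0) mul1r subr_eq0 /= => /eqP gn.
  split=> // j /vIo.
  by rewrite vE !mxE => /eqP; rewrite mulf_eq0 (negbTE a0) => /eqP.
exists (\col_(j < n.+1) gseq l j); split.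
- by apply/eqP => /colP /(_ 0); rewrite !mxE /gseq rec0 => /eqP; rewrite oner_eq0.
- apply/tridiag_eigenvectorP; rewrite !mxE /gseq rec0 scale1r mul1r.
  by move: gn; rewrite /gseq /= => ->; rewrite subrr mulr0.
- by move=> j /gIo; rewrite mxE.
Qed.

End PathGraph.

Section ControlNodes.
Variables (n : nat) (Io : {set 'I_n}).

Lemma ctrl_seq_sorted : sorted ltn (ctrl_seq Io).
Proof.
apply: (subseq_sorted ltn_trans _ (iota_ltn_sorted 0 n)).
rewrite /ctrl_seq -val_enum_ord; apply: map_subseq.
by rewrite enumT /enum_mem -enumT filter_subseq.
Qed.

Lemma mem_ctrl_seq (j : 'I_n) : (val j \in ctrl_seq Io) = (j \in Io).
Proof. by rewrite /ctrl_seq mem_map ?mem_enum //; exact: val_inj. Qed.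

Lemma ctrl_seq_lt x : x \in ctrl_seq Io -> (x < n)%N.
Proof. by case/mapP => j _ ->; apply: ltn_ord. Qed.

Lemma all_ctrl_seq (P : nat -> Prop) :
  {in Io, forall j : 'I_n, P j} <-> {in ctrl_seq Io, forall x, P x}.
Proof.
split=> Pz x; last by rewrite -mem_ctrl_seq => /Pz.
by case/mapP => j; rewrite mem_enum => /Pz Pj ->.
Qed.

End ControlNodes.

Lemma common_eigE (R : rcfType) (l : R) n (Io : {set 'I_n}) : Io != set0 ->
  common_eig Io l <->
  gseq l n = gseq l n.-1 /\ {in Io, forall j : 'I_n, gseq l j = 0}.
Proof.
case/set0Pn => j0 j0Io; rewrite /common_eig (all_ctrl_seq Io (fun x => gseq l x = 0)).
have := @ctrl_seq_lt _ Io; have := @mem_ctrl_seq _ Io j0; rewrite j0Io.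
move: (ctrl_seq Io) (ctrl_seq_sorted Io) => [//|a t] st _ lt_n /=.
have gap k : (k < size t)%N ->
    ((nth 0 t k - nth 0 (a :: t) k - 1).+1 = nth 0 t k - nth 0 (a :: t) k)%N.
  by move=> kt; have /= := (pathP 0%N st) k kt; lia.
have last_lt : (last a t < n)%N := lt_n _ (mem_last a t).
split=> [[/eigenvalue_Nmat ga gapM /eigenvalue_Nmat gl] | [gn z]].
  have zt : {in t, forall x, gseq l x = 0}.
    by apply/(gseq_eq0_sorted st ga) => k kt; rewrite -gap // -eigenvalue_Mmat; apply: gapM.
  have zs : {in a :: t, forall x, gseq l x = 0} by move=> x /predU1P[-> //|/zt].
  by split=> //; apply/(gseq_end_after (zs _ (mem_last a t)) last_lt).
have ga : gseq l a = 0 by apply/z/mem_head.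
split; first exact/eigenvalue_Nmat.
  move=> k kt; rewrite eigenvalue_Mmat gap //; move: k kt.
  by apply/(gseq_eq0_sorted st ga) => x xt; apply: z; rewrite inE xt orbT.
exact/eigenvalue_Nmat/(gseq_end_after (z _ (mem_last a t)) last_lt).
Qed.

Section SymmetricEigenvector.
Variable R : rcfType.
Local Notation C := R[i].
Local Notation toC := (real_complex R).
Local Notation Re := (@complex.Re R).
Local Notation Im := (@complex.Im R).

Lemma map_Re_mulmx m n p (Y : 'M[C]_(m, n)) (M : 'M[R]_(n, p)) :
  map_mx Re (Y *m map_mx toC M) = map_mx Re Y *m M.
Proof.
apply/matrixP => i j; rewrite !mxE raddf_sum; apply: eq_bigr => k _.
by rewrite !mxE; case: (Y i k) => a b; rewrite /= mulr0 subr0.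
Qed.

Lemma map_Im_mulmx m n p (Y : 'M[C]_(m, n)) (M : 'M[R]_(n, p)) :
  map_mx Im (Y *m map_mx toC M) = map_mx Im Y *m M.
Proof.
apply/matrixP => i j; rewrite !mxE raddf_sum; apply: eq_bigr => k _.
by rewrite !mxE; case: (Y i k) => a b; rewrite /= mulr0 add0r.
Qed.

Lemma map_Re_scale m n (z : C) (Y : 'M[C]_(m, n)) :
  map_mx Re (z *: Y) = Re z *: map_mx Re Y - Im z *: map_mx Im Y.
Proof. by apply/matrixP => i j; rewrite !mxE; case: z; case: (Y i j). Qed.

Lemma map_Im_scale m n (z : C) (Y : 'M[C]_(m, n)) :
  map_mx Im (z *: Y) = Im z *: map_mx Re Y + Re z *: map_mx Im Y.
Proof.
by apply/matrixP => i j; rewrite !mxE; case: z; case: (Y i j) => a b c d /=; rewrite addrC.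
Qed.

Lemma stablemx_rotation n m (A : 'M[R]_n) (U : 'M[R]_(m, n)) :
  stablemx U A -> U != 0 ->
  exists a b (x1 x2 : 'rV_n), [/\ (x1 != 0) || (x2 != 0), (x1 <= U)%MS, (x2 <= U)%MS,
    x1 *m A = a *: x1 - b *: x2 & x2 *m A = b *: x1 + a *: x2].
Proof.
(* x1, x2 are the real and imaginary parts of a complex eigenvector of the
   restriction of A to U, pulled back along the basis row_base U. *)
move=> UA U0; set V := row_base U; set A' := restrictmx U A.
have A'V : A' *m V = V *m A by rewrite mulmxKpV ?stablemx_row_base.
have [z /eigenvalueP [y yA' y0]] : exists z, eigenvalue (map_mx toC A') z.
  by apply: eigenvalue_closed; rewrite lt0n mxrank_eq0.
have Re_y : map_mx Re y *m A' = Re z *: map_mx Re y - Im z *: map_mx Im y.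
  by rewrite -map_Re_mulmx yA' map_Re_scale.
have Im_y : map_mx Im y *m A' = Im z *: map_mx Re y + Re z *: map_mx Im y.
  by rewrite -map_Im_mulmx yA' map_Im_scale.
have sub_U (w : 'rV_(\rank U)) : (w *m V <= U)%MS.
  by rewrite (submx_trans (submxMl _ _)) ?eq_row_base.
exists (Re z), (Im z), (map_mx Re y *m V), (map_mx Im y *m V); split=> //.
- rewrite !mulmx_free_eq0 ?row_base_free // -negb_and.
  apply: contra y0 => /andP[/eqP/matrixP yr /eqP/matrixP yi]; apply/eqP/matrixP => i j.
  by move: (yr i j) (yi i j); rewrite !mxE; case: (y i j) => a b /= -> ->.
- by rewrite -mulmxA -A'V mulmxA Re_y !scalemxAl; apply: mulmxBl.
- by rewrite -mulmxA -A'V mulmxA Im_y !scalemxAl; apply: mulmxDl.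
Qed.

Lemma sqnorm_rV n (u : 'rV[R]_n) : (u *m u^T) 0 0 = \sum_i u 0 i ^+ 2.
Proof. by rewrite mxE; apply: eq_bigr => i _; rewrite mxE expr2. Qed.

Lemma sqnorm_rV_ge0 n (u : 'rV[R]_n) : 0 <= (u *m u^T) 0 0.
Proof. by rewrite sqnorm_rV sumr_ge0 // => i _; apply: sqr_ge0. Qed.

Lemma sqnorm_rV_eq0 n (u : 'rV[R]_n) : (u *m u^T) 0 0 = 0 -> u = 0.
Proof.
rewrite sqnorm_rV => /(psumr_eq0P (fun i _ => sqr_ge0 (u 0 i))) u0.
by apply/rowP => i; apply/eqP; rewrite mxE -sqrf_eq0 u0.
Qed.

Lemma symmetric_rotation_real n (A : 'M[R]_n) a b (x1 x2 : 'rV_n) :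
  A^T = A -> (x1 != 0) || (x2 != 0) ->
  x1 *m A = a *: x1 - b *: x2 -> x2 *m A = b *: x1 + a *: x2 -> b = 0.
Proof.
move=> sA nz E1 E2; apply/eqP; apply: contraTT nz => b0.
(* <x1 A, x2> = <x1, x2 A> reads b (|x1|^2 + |x2|^2) = 0. *)
have : x1 *m A *m x2^T = x1 *m (x2 *m A)^T by rewrite trmx_mul sA mulmxA.
rewrite E1 E2 mulmxBl -!scalemxAl [(_ + _)^T]linearD /= [(b *: _)^T]linearZ.
rewrite [(a *: _)^T]linearZ /= mulmxDr -!scalemxAr.
move/matrixP/(_ 0 0) => E.
have /eqP : b * ((x1 *m x1^T) 0 0 + (x2 *m x2^T) 0 0) = 0.
  by move: E; rewrite !mxE; lra.
rewrite mulf_eq0 (negbTE b0) paddr_eq0 ?sqnorm_rV_ge0 //=.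
by case/andP=> /eqP/sqnorm_rV_eq0 -> /eqP/sqnorm_rV_eq0 ->; rewrite eqxx.
Qed.

Lemma symmetric_stablemx_eigenvector n m (A : 'M[R]_n) (U : 'M[R]_(m, n)) :
  A^T = A -> stablemx U A -> U != 0 ->
  exists l (v : 'rV_n), [/\ v != 0, (v <= U)%MS & v *m A = l *: v].
Proof.
move=> sA UA U0; have [a [b [x1 [x2 [nz x1U x2U E1 E2]]]]] := stablemx_rotation UA U0.
have b0 := symmetric_rotation_real sA nz E1 E2.
exists a; case/orP: nz => [x1_0|x2_0]; [exists x1 | exists x2]; split=> //.
  by rewrite E1 b0 scale0r subr0.
by rewrite E2 b0 scale0r add0r.
Qed.

End SymmetricEigenvector.

Section Kalman.
Variables (R : fieldType) (n p : nat) (A : 'M[R]_n) (B : 'M[R]_(n, p)).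

Definition kalman := \mxrow_(k < n) (A ^+ k *m B).

Lemma mul_kalman_eq0 m (U : 'M[R]_(m, n)) :
  U *m kalman = 0 <-> forall k, (k < n)%N -> U *m A ^+ k *m B = 0.
Proof.
rewrite mul_mxrow; split=> [UK k kn | UAB].
  rewrite -mulmxA -(mxrowK (fun k : 'I_n => U *m (A ^+ k *m B)) (Ordinal kn)).
  by rewrite UK submxrow0.
by rewrite (eq_mxrow (B_ := fun _ => 0)) ?mxrow0 // => k; rewrite mulmxA UAB.
Qed.

Lemma mulmx_exprn_eq0 m (U : 'M[R]_(m, n)) :
  (forall k, (k < n)%N -> U *m A ^+ k *m B = 0) -> U *m A ^+ n *m B = 0.
Proof.
case: n A U B => [|n'] A' U B' UAB; first by rewrite [U]thinmx0 !mul0mx.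
have CH : U *m horner_mx A' (char_poly A') *m B' = 0 by rewrite Cayley_Hamilton mulmx0 mul0mx.
have size_chA : size (char_poly A') = n'.+2 by rewrite size_char_poly.
have lead_chA : (char_poly A')`_n'.+1 = 1.
  by move: (char_poly_monic A'); rewrite monicE /lead_coef size_chA => /eqP.
move: CH; rewrite -(coefK (char_poly A')) poly_def size_chA rmorph_sum big_ord_recr /=.
rewrite lead_chA scale1r rmorphXn /= horner_mx_X mulmxDr mulmxDl mulmx_sumr mulmx_suml.
rewrite big1 ?add0r // => i _.
by rewrite horner_mxZ rmorphXn /= horner_mx_X -scalemxAr -scalemxAl UAB ?scaler0.
Qed.

Lemma kermx_kalman_stable : stablemx (kermx kalman) A.
Proof.
have UAB := (mul_kalman_eq0 (kermx kalman)).1 (mulmx_ker _).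
apply/sub_kermxP/mul_kalman_eq0 => k kn; rewrite -(mulmxA _ A) mulmxE -exprS -mulmxE.
have [lt|eq] : (k.+1 < n)%N \/ k.+1 = n by lia.
  exact: UAB.
by rewrite eq; apply: mulmx_exprn_eq0.
Qed.

End Kalman.

Lemma trmxX (R : comNzRingType) n (A : 'M[R]_n) k : (A ^+ k)^T = A^T ^+ k.
Proof.
elim: k => [|k IH]; first by rewrite !expr0 trmx1.
by rewrite exprS exprSr -!mulmxE trmx_mul IH.
Qed.

Section PBH.
Variable R : rcfType.

Lemma observable_trmx n p (A : 'M[R]_n) (B : 'M[R]_(n, p)) : A^T = A ->
  observable A B^T = reachable A B.
Proof.
move=> sA; rewrite /observable /reachable -mxrank_tr tr_mxcol.
by congr (\rank _ == n); apply: eq_mxrow => k; rewrite trmx_mul trmxK trmxX sA.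
Qed.

Lemma reachable_symmetricP n p (A : 'M[R]_n) (B : 'M[R]_(n, p)) : A^T = A ->
  reachable A B <-> ~ exists l (v : 'rV_n), [/\ v != 0, v *m A = l *: v & v *m B = 0].
Proof.
move=> sA; have -> : reachable A B = row_free (kalman A B) by []; split.
  move=> KB [l [v [v0 vA vB]]]; move/negP: v0; apply.
  rewrite -(mulmx_free_eq0 _ KB); apply/eqP/mul_kalman_eq0 => k _.
  have vAk : v *m A ^+ k = l ^+ k *: v.
    elim: k => [|k IH]; first by rewrite expr0 mulmx1 scale1r.
    by rewrite exprSr -mulmxE mulmxA IH -scalemxAl vA scalerA -exprSr.
  by rewrite vAk -scalemxAl vB scaler0.
move=> no_ev; apply/negPn/negP; rewrite -kermx_eq0 => K0; apply: no_ev.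
have [l [v [v0 vK vA]]] := symmetric_stablemx_eigenvector sA (kermx_kalman_stable A B) K0.
exists l, v; split=> //; have n0 : (0 < n)%N.
  by move: v v0 {vK vA}; case: (n) => // v; rewrite thinmx0 eqxx.
have := (mul_kalman_eq0 A B v).1 (sub_kermxP vK) 0%N n0.
by rewrite expr0 mulmx1.
Qed.

End PBH.

Section PathControl.
Variables (R : rcfType) (n : nat) (Io : {set 'I_n}).

Lemma mul_inputMat_eq0 (w : 'rV[R]_n) :
  w *m inputMat R Io = 0 <-> {in Io, forall j, w 0 j = 0}.
Proof.
have wB j : (w *m inputMat R Io) 0 j = w 0 (enum_val j).
  rewrite mxE (bigD1 (enum_val j)) //= big1 ?addr0 => [|i /negbTE ne].
    by rewrite mxE eqxx mulr1.
  by rewrite mxE ne mulr0.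
split=> [wB0 j jIo | w0]; last by apply/rowP => j; rewrite wB mxE w0 ?enum_valP.
by move/rowP/(_ (enum_rank_in jIo j)): wB0; rewrite wB enum_rankK_in // mxE.
Qed.

Lemma unreachable_eig_rowE l : unreachable_eig Io l <->
  exists v : 'rV_n, [/\ v != 0, v *m pathLap R n = l *: v & v *m inputMat R Io = 0].
Proof.
have sL := pathLap_tr R n.
split=> [[v [v0 Lv vIo]] | [v [v0 vL /mul_inputMat_eq0 vIo]]].
  exists v^T; split; first by rewrite trmx_eq0.
    by rewrite -{1}sL -trmx_mul Lv linearZ.
  by apply/mul_inputMat_eq0 => j /vIo; rewrite mxE.
exists v^T; split; first by rewrite trmx_eq0.
  by rewrite -{1}sL -trmx_mul vL linearZ.
by move=> j /vIo; rewrite mxE.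
Qed.

End PathControl.

Theorem mainTheorem7 (R : rcfType) (n : nat) (Io : {set 'I_n}) :
  Io != set0 ->
  [/\ reachable (pathLap R n) (inputMat R Io) <-> ~ (exists lam : R, common_eig Io lam),
      observable (pathLap R n) (inputMat R Io)^T <-> ~ (exists lam : R, common_eig Io lam)
    & forall lam : R, common_eig Io lam <-> unreachable_eig Io lam].
Proof.
move=> Io0; have n0 : (0 < n)%N by case/set0Pn: Io0 => j _; apply: leq_ltn_trans (ltn_ord j).
have sL := pathLap_tr R n.
have common_unreach (lam : R) : common_eig Io lam <-> unreachable_eig Io lam.
  by rewrite common_eigE // unreachable_eigE.
have reach : reachable (pathLap R n) (inputMat R Io) <-> ~ exists lam : R, common_eig Io lam.
  apply: (iff_trans (reachable_symmetricP (inputMat R Io) sL)); split=> no_ev [lam].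
    by move=> /common_unreach /unreachable_eig_rowE [v Hv]; apply: no_ev; exists lam, v.
  by case=> v Hv; apply: no_ev; exists lam; apply/common_unreach/unreachable_eig_rowE; exists v.
by split; rewrite ?observable_trmx.
Qed.
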